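(* Let $A_1,\dots,A_N$ be symmetric $N\times N$ matrices over $\mathbb{F}_2$ with $(A_i)_{k,k}=\delta_{ik}$ for all $i,k$, and for $z\in\mathbb{F}_2^N$ let $A(z)=\sum_{i=1}^Nz(i)A_i$. Then, for $y,z$ chosen uniformly and independently from $\mathbb{F}_2^N$, $$\Pr_{y,z}\big\{A(z)\cdot y=y+z+\mathbf{1}\big\}\le\Big(\frac34\Big)^N,$$ where $\mathbf{1}$ is the all-ones vector. *)

From HB Require Import structures.
From mathcomp Require Import all_boot all_order all_algebra.
Set Implicit Arguments. Unset Strict Implicit. Unset Printing Implicit Defensive.
Import GRing.Theory Num.Theory.
Local Open Scope ring_scope.

Definition Amat (N : nat) (A : 'I_N -> 'M['F_2]_N) (z : 'cV['F_2]_N) : 'M['F_2]_N :=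
  \sum_(i < N) z i 0 *: A i.

Definition ones (N : nat) : 'cV['F_2]_N := const_mx 1.

Definition prob_event (N : nat) (A : 'I_N -> 'M['F_2]_N) : rat :=
  (#|[set yz : 'cV['F_2]_N * 'cV['F_2]_N |
       Amat A yz.2 *m yz.1 == yz.1 + yz.2 + ones N]|)%:R
  / (#|{: 'cV['F_2]_N * 'cV['F_2]_N}|)%:R.

(* Put C(z) = A(z) - 1, a symmetric matrix whose entries are affine in z, with
   C(z)_kk = z_k + 1.  The solutions y of A(z) y = y + z + 1 are those of
   C(z) y = z + 1, so there are at most |ker C(z)| of them, and if the
   principal minor D_S(z) = det C(z)[S,S] is nonzero then ker C(z) meets
   {y | y = 0 on S} trivially, whence |ker C(z)| <= 2^(N - |S|).  It thus
   suffices to match the points z bijectively with the subsets S so that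
   D_S(z) != 0, because sum_S 2^(N - |S|) = 3^N.

   Such a matching is a permutation with nonzero diagonal of the matrix
   E = (D_S(1_V))_(V,S), which exists as soon as det E != 0.  Over F_2 the
   determinant of a symmetric matrix only sees the involutions, and every
   non-identity involution contributes a squared affine factor; hence D_S(z)
   is prod_(k in S) (z_k + 1) plus a polynomial of degree < |S|.  A
   polynomial of degree < |T| sums to zero over the subcube {1_V | V <= T}, so
   sum_(V <= T) D_S(1_V) = [T <= S] whenever |S| <= |T|: the subset zeta
   transform of E is unitriangular with respect to cardinality, and
   det E = 1. *)

From HB Require Import structures.
From mathcomp Require Import all_boot all_order all_algebra all_fingroup.
From Stdlib Require Import FunctionalExtensionality.
Import GRing.Theory Num.Theory.
Local Open Scope ring_scope.
Set Implicit Arguments. Unset Strict Implicit. Unset Printing Implicit Defensive.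

Lemma pchar_F2 : 2 \in [char 'F_2].
Proof. exact: pchar_Fp. Qed.

Lemma F2P (x : 'F_2) : x = 0 \/ x = 1.
Proof. by case: x => [[|[|m]]] //= H; [left|right]; apply: val_inj. Qed.

Lemma mulF2xx (x : 'F_2) : x * x = x.
Proof. by case: (F2P x) => ->; rewrite ?mulr0 ?mulr1. Qed.

Section PolynomialFunctions.

Variable N : nat.
Local Notation vec := 'cV['F_2]_N.

Definition affine_fun (l : vec -> 'F_2) :=
  exists (c : 'F_2) (w : 'I_N -> 'F_2), forall z, l z = c + \sum_i w i * z i 0.

Inductive degree_le : nat -> (vec -> 'F_2) -> Prop :=
| degree_le_cst r c : degree_le r (fun _ => c)
| degree_le_add r g h : degree_le r g -> degree_le r h -> degree_le r (g \+ h)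
| degree_le_mul r g l :
    degree_le r g -> affine_fun l -> degree_le r.+1 (fun z => g z * l z).

Lemma degree_le_eq r (g h : vec -> 'F_2) : degree_le r g -> g =1 h -> degree_le r h.
Proof. by move=> dg /functional_extensionality <-. Qed.

Lemma affine_fun_shift (l : vec -> 'F_2) e :
  affine_fun l -> affine_fun (fun z => l (z + e)).
Proof.
case=> c [w lE]; exists (c + \sum_i w i * e i 0), w => z.
rewrite lE -addrA; congr (_ + _); rewrite -big_split /=; apply: eq_bigr => i _.
by rewrite mxE mulrDr addrC.
Qed.

Lemma affine_fun_diff (l : vec -> 'F_2) e :
  affine_fun l -> exists k, forall z, l z + l (z + e) = k.
Proof.
case=> c [w lE]; exists (\sum_i w i * e i 0) => z.
rewrite !lE addrACA addrr_pchar2 ?pchar_F2 // add0r -big_split /=.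
by apply: eq_bigr => i _; rewrite mxE mulrDr addrA addrr_pchar2 ?pchar_F2 ?add0r.
Qed.

Lemma degree_le_mulr r (g : vec -> 'F_2) c :
  degree_le r g -> degree_le r (fun z => g z * c).
Proof.
elim=> {r g} [r c'|r g h _ dg _ dh|r g l _ dg al].
- exact: degree_le_cst.
- by apply: degree_le_eq (degree_le_add dg dh) _ => z; rewrite /= mulrDl.
- by apply: degree_le_eq (degree_le_mul dg al) _ => z; rewrite -!mulrA [l z * c]mulrC.
Qed.

Lemma degree_le0_cst r (g : vec -> 'F_2) :
  degree_le r g -> r = 0%N -> exists c, forall z, g z = c.
Proof.
elim=> {r g} [r c|r g h _ dg _ dh|//] r0; first by exists c.
by have [a ga] := dg r0; have [b hb] := dh r0; exists (a + b) => z; rewrite /= ga hb.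
Qed.

Lemma degree_le_sum r (I : finType) (P : pred I) (F : I -> vec -> 'F_2) :
  (forall i, P i -> degree_le r (F i)) -> degree_le r (fun z => \sum_(i | P i) F i z).
Proof.
move=> dF; elim: (index_enum I) => [|i s IH].
  by apply: degree_le_eq (degree_le_cst r 0) _ => z; rewrite big_nil.
case Pi: (P i); last by apply: degree_le_eq IH _ => z; rewrite big_cons Pi.
by apply: degree_le_eq (degree_le_add (dF i Pi) IH) _ => z; rewrite big_cons Pi.
Qed.

Lemma degree_le_prod (I : finType) (P : pred I) (F : I -> vec -> 'F_2) :
  (forall i, affine_fun (F i)) -> degree_le #|P| (fun z => \prod_(i | P i) F i z).
Proof.
move=> aF; set s := [seq i <- index_enum I | P i].
have -> : #|P| = size s by rewrite -sum1_card -big_filter sum1_size.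
apply: (@degree_le_eq _ (fun z => \prod_(i <- s) F i z)) => [|z]; last exact: big_filter.
elim: s => [|i s IH].
  by apply: degree_le_eq (degree_le_cst 0 1) _ => z; rewrite big_nil.
by apply: degree_le_eq (degree_le_mul IH (aF i)) _ => z; rewrite big_cons mulrC.
Qed.

Lemma degree_le_diff r (h : vec -> 'F_2) e :
  degree_le r h -> degree_le r.-1 (fun z => h z + h (z + e)).
Proof.
elim=> {r h} [r c|r g h _ dg _ dh|r g l dg0 dg al].
- by apply: degree_le_eq (degree_le_cst _ 0) _ => z; rewrite addrr_pchar2 ?pchar_F2.
- by apply: degree_le_eq (degree_le_add dg dh) _ => z; rewrite /= addrACA.
have [k lk] := affine_fun_diff e al.
have leibniz z : g z * l z + g (z + e) * l (z + e)
    = (g z + g (z + e)) * l (z + e) + g z * (l z + l (z + e)).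
  by rewrite mulrDl mulrDr addrCA addrAC addrr_pchar2 ?pchar_F2 // add0r.
have dgl : degree_le r (fun z => (g z + g (z + e)) * l (z + e)).
  case: r dg0 dg {leibniz} => [|r] dg0 dg; last exact: degree_le_mul dg (affine_fun_shift e al).
  have [c gc] := degree_le0_cst dg0 erefl.
  by apply: degree_le_eq (degree_le_cst _ 0) _ => z; rewrite !gc addrr_pchar2 ?pchar_F2 ?mul0r.
apply: degree_le_eq (degree_le_add dgl (degree_le_mulr k dg0)) _ => z.
by rewrite leibniz lk.
Qed.

Definition indic (V : {set 'I_N}) : vec := \col_k (k \in V)%:R.

Lemma indicU1 (V : {set 'I_N}) t : t \notin V -> indic (t |: V) = indic V + indic [set t].
Proof.
move=> tV; apply/matrixP => i j; rewrite !mxE !inE.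
by case: (eqVneq i t) => [->|]; rewrite ?(negbTE tV) ?add0r ?addr0.
Qed.

Lemma indic_bij : bijective indic.
Proof.
exists (fun z : vec => [set k | z k 0 != 0]) => [V|z].
  by apply/setP => k; rewrite inE mxE; case: (k \in V); rewrite ?oner_eq0 ?eqxx.
apply/matrixP => k j; rewrite (ord1 j) !mxE inE.
by case: (F2P (z k 0)) => ->; rewrite ?eqxx ?oner_eq0.
Qed.

End PolynomialFunctions.

Lemma sum_subsets_split (R : nmodType) (T : finType) (A : {set T}) t
    (F : {set T} -> R) : t \in A ->
  \sum_(V : {set T} | V \subset A) F V
    = \sum_(V : {set T} | V \subset A :\ t) (F V + F (t |: V)).
Proof.
move=> tA; rewrite big_split /= (bigID (fun V : {set T} => t \in V)) /= addrC.
congr (_ + _); first by apply: eq_bigl => V; rewrite subsetD1.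
rewrite (reindex_onto (fun V => t |: V) (fun W => W :\ t)) /=; last first.
  by move=> V /andP[_ tV]; rewrite setD1K.
apply: eq_bigl => V; rewrite setU11 andbT subsetD1 subUset sub1set tA /=.
case tV: (t \in V); last by rewrite setU1K ?tV ?eqxx.
by rewrite andbF; apply/andP => -[_ /eqP E]; move: tV; rewrite -E setD11.
Qed.

(* Summing over the subcube spanned by T amounts to |T| successive
   differences, each of which lowers the degree. *)
Lemma sum_subcube_degree_lt N r (h : 'cV['F_2]_N -> 'F_2) (T : {set 'I_N}) :
  degree_le r h -> (r < #|T|)%N -> \sum_(V : {set 'I_N} | V \subset T) h (indic V) = 0.
Proof.
elim: r h T => [|r IH] h T dh rT.
all: have [t tT] : exists t, t \in T by apply/set0Pn; rewrite -card_gt0 (leq_ltn_trans _ rT).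
all: rewrite (sum_subsets_split _ tT).
all: under eq_bigr => V /[!subsetD1] /andP[_ tV] do rewrite (indicU1 tV).
  have [c hc] := degree_le0_cst dh erefl.
  by apply: big1 => V _; rewrite !hc addrr_pchar2 ?pchar_F2.
apply: IH (degree_le_diff _ dh) _.
by rewrite (cardsD1 t T) tT add1n ltnS in rT.
Qed.

Lemma det_F2E n (M : 'M['F_2]_n) : \det M = \sum_(s : 'S_n) \prod_i M i (s i).
Proof.
by apply: eq_bigr => s _; rewrite oppr_pchar2 ?pchar_F2 // expr1n mul1r.
Qed.

Lemma sum_F2_fixfree_involution (I : finType) (P : pred I) (f : I -> I)
    (F : I -> 'F_2) :
  involutive f -> (forall x, P (f x) = P x) -> (forall x, F (f x) = F x) ->
  (forall x, P x -> f x != x) -> \sum_(x | P x) F x = 0.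
Proof.
move=> fK Pf Ff fP.
pose lt_f x := (enum_rank x < enum_rank (f x))%N.
rewrite (bigID lt_f) /=; set a := (X in X + _).
suff -> : \sum_(x | P x && ~~ lt_f x) F x = a by rewrite addrr_pchar2 ?pchar_F2.
rewrite (reindex_inj (inv_inj fK)) /=; apply: eq_big => x; last by rewrite Ff.
rewrite Pf /lt_f fK; case Px: (P x) => //=.
rewrite -leqNgt leq_eqVlt; case: eqP => //= /val_inj/enum_rank_inj fx.
by have := fP x Px; rewrite -fx eqxx.
Qed.

Section SymmetricDeterminant.

Variables (n : nat) (M : 'M['F_2]_n).
Hypothesis M_sym : M^T = M.

Lemma prod_perm_invg (s : 'S_n) :
  \prod_i M i ((s^-1)%g i) = \prod_i M i (s i).
Proof.
rewrite (reindex_inj (@perm_inj _ s)); apply: eq_bigr => i _.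
by rewrite permK -{1}M_sym mxE.
Qed.

(* Permutations other than involutions cancel with their inverses. *)
Lemma det_sym_F2 : \det M
  = \prod_i M i i + \sum_(s : 'S_n | (s != 1%g) && ((s^-1)%g == s)) \prod_i M i (s i).
Proof.
rewrite det_F2E (bigD1 1%g) //=; congr (_ + _).
  by apply: eq_bigr => i _; rewrite perm1.
rewrite (bigID (fun s : 'S_n => (s^-1)%g == s)) /=.
rewrite [X in _ + X](@sum_F2_fixfree_involution _ _ invg) ?addr0 //.
- exact: invgK.
- by move=> s; rewrite invgK eq_invg1 [_^-1%g == _]eq_sym.
- by move=> s; rewrite prod_perm_invg.
- by move=> s /andP[].
Qed.

End SymmetricDeterminant.

Section SymmetricAffineDeterminant.

Variables (N n : nat) (M : 'cV['F_2]_N -> 'M['F_2]_n).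
Hypothesis M_sym : forall z, (M z)^T = M z.
Hypothesis M_affine : forall i j, affine_fun (fun z => M z i j).

(* A 2-cycle (i0 j0) of s contributes M i0 j0 * M j0 i0 = M i0 j0 ^+ 2 = M i0 j0,
   so the product has only n - 1 distinct affine factors. *)
Lemma degree_le_prod_involution (s : 'S_n) : s != 1%g -> (s^-1)%g == s ->
  degree_le n.-1 (fun z => \prod_i M z i (s i)).
Proof.
move=> s1 /eqP sV.
have [i0 si0] : exists i0, s i0 != i0.
  apply/existsP; apply: contraR s1 => /existsPn s_id; apply/eqP/permP => i.
  by rewrite perm1; apply/eqP; move: (s_id i); rewrite negbK.
set j0 := s i0; have sj0 : s j0 = i0 by rewrite /j0 -{1}sV permK.
have -> : n.-1 = #|predC1 j0| by rewrite cardC1 card_ord.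
apply: degree_le_eq (degree_le_prod _ (fun i => M_affine i (s i))) _ => z.
have i0j0 : i0 != j0 by rewrite eq_sym.
have Mj0i0 : M z j0 i0 = M z i0 j0 by rewrite -{1}(M_sym z) mxE.
rewrite [RHS](bigD1 j0) //= sj0 [X in _ = _ * X](bigD1 i0 i0j0) [LHS](bigD1 i0 i0j0).
by rewrite mulrA Mj0i0 mulF2xx.
Qed.

Lemma degree_le_det_sym : degree_le n.-1 (fun z => \det (M z) + \prod_i M z i i).
Proof.
pose P (s : 'S_n) := (s != 1%g) && ((s^-1)%g == s).
apply: degree_le_eq (@degree_le_sum _ _ _ P (fun s z => \prod_i M z i (s i)) _) _.
  by move=> s /andP[]; apply: degree_le_prod_involution.
by move=> z; rewrite /= det_sym_F2 // addrAC addrr_pchar2 ?pchar_F2 ?add0r.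
Qed.

End SymmetricAffineDeterminant.

Definition principal_submx (R : Type) n (S : {set 'I_n}) (M : 'M[R]_n) : 'M[R]_#|S| :=
  mxsub enum_val enum_val M.

Lemma sum_subsets_disjoint_F2 (T : finType) (S A : {set T}) :
  \sum_(V : {set T} | V \subset A) ([disjoint S & V]%:R : 'F_2) = (A \subset S)%:R.
Proof.
rewrite (bigID (fun V : {set T} => [disjoint S & V])) /= [X in _ + X]big1 ?addr0; last first.
  by move=> V /andP[_ /negbTE ->].
rewrite (eq_bigr (fun _ => 1)) => [|V /andP[_ ->] //].
rewrite (eq_bigl (mem (powerset (A :\: S)))) => [|V]; last first.
  by rewrite /= powersetE subsetD disjoint_sym.
rewrite sumr_const card_powerset -mulr_natr mul1r natrX.
rewrite -setD_eq0 -cards_eq0; case: #|_| => [|k]; first by rewrite expr0.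
by rewrite exprS pchar_Fp_0 ?mul0r.
Qed.

Lemma det_neq0_perm (R : comNzRingType) n (M : 'M[R]_n) :
  \det M != 0 -> exists s : 'S_n, forall i, M i (s i) != 0.
Proof.
move=> detM; have [/existsP[s /forallP Ms]|/existsPn no_s] :=
  boolP [exists s : 'S_n, [forall i, M i (s i) != 0]]; first by exists s.
move: detM; rewrite /determinant big1 ?eqxx // => s _.
have /forallPn[i /negPn/eqP Mi] := no_s s.
by rewrite (bigD1 i) //= Mi mul0r mulr0.
Qed.

(* A permutation s whose diagonal avoids the zeros of M can only raise w, and
   it preserves the total weight, so it fixes every index. *)
Lemma det_weight_unitriangular (R : comNzRingType) n (M : 'M[R]_n) (w : 'I_n -> nat) :
  (forall i, M i i = 1) -> (forall i j, i != j -> M i j != 0 -> (w i < w j)%N) ->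
  \det M = 1.
Proof.
move=> M1 Mw; rewrite /determinant (bigD1 1%g) //= odd_perm1 expr0 mul1r.
rewrite [X in _ + X]big1 => [|s s1]; first by rewrite addr0; apply: big1 => i _; rewrite perm1.
have [/forallP Ms|/forallPn[i /negPn/eqP Mi]] := boolP [forall i, M i (s i) != 0]; last first.
  by rewrite (bigD1 i) //= Mi mul0r mulr0.
exfalso; move/eqP: s1; apply; apply/permP => i; rewrite perm1; apply/eqP/contraT => si.
have w_le j : (w j <= w (s j))%N.
  by case: (eqVneq j (s j)) => [<- //|/Mw/(_ (Ms j))/ltnW].
have : (\sum_j w j < \sum_j w (s j))%N.
  rewrite (bigD1 i) // [X in (_ < X)%N](bigD1 i) //= -addSn.
  by rewrite leq_add ?leq_sum // (Mw _ _ _ (Ms i)) // eq_sym.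
have -> : (\sum_j w (s j) = \sum_j w j)%N by exact: esym (reindex_inj (@perm_inj _ s)).
by rewrite ltnn.
Qed.

Section PrincipalMinors.

Variables (N : nat) (C : 'cV['F_2]_N -> 'M['F_2]_N).
Hypothesis C_sym : forall z, (C z)^T = C z.
Hypothesis C_affine : forall k l, affine_fun (fun z => C z k l).
Hypothesis C_diag : forall z k, C z k k = z k 0 + 1.

Local Notation nsets := #|{: {set 'I_N}}|.
Local Notation minor S z := (\det (principal_submx S (C z))).

Lemma prod_diag_principal_submx (S V : {set 'I_N}) :
  \prod_i principal_submx S (C (indic V)) i i = [disjoint S & V]%:R.
Proof.
under eq_bigr do rewrite mxE C_diag mxE.
rewrite -(big_enum_val (fun k => (k \in V)%:R + 1)) /=.
case: (boolP [disjoint S & V]) => [/pred0P SV|/pred0Pn[k /andP[kS kV]]].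
  by apply: big1 => k kS; move: (SV k); rewrite /= kS /= => ->; rewrite add0r.
by rewrite (bigD1 k) //= (_ : k \in V) // addrr_pchar2 ?pchar_F2 ?mul0r.
Qed.

Lemma sum_subcube_principal_minor (S T : {set 'I_N}) : (#|S| <= #|T|)%N ->
  \sum_(V : {set 'I_N} | V \subset T) minor S (indic V) = (T \subset S)%:R.
Proof.
move=> ST; have [T0|T_gt0] := posnP #|T|.
  have S0 : S = set0 by apply/cards0_eq; move: ST; rewrite T0 leqn0 => /eqP.
  move/cards0_eq: T0 => ->; rewrite S0 sub0set (big_pred1 set0) => [|V]; last first.
    by rewrite subset0.
  by move: (principal_submx _ _); rewrite cards0 => M0; rewrite det_mx00.
pose d z := minor S z + \prod_i principal_submx S (C z) i i.
have dd : degree_le #|S|.-1 d.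
  apply: degree_le_det_sym => [z|i j]; first by rewrite trmx_mxsub C_sym.
  by have [c [w Cw]] := C_affine (enum_val i) (enum_val j); exists c, w => z; rewrite mxE.
have d0 := sum_subcube_degree_lt dd (_ : #|S|.-1 < #|T|)%N.
rewrite (eq_bigr (fun V => d (indic V) + [disjoint S & V]%:R)) => [|V _]; last first.
  by rewrite -prod_diag_principal_submx addrK_pchar2 ?pchar_F2.
by rewrite big_split /= d0 ?add0r ?sum_subsets_disjoint_F2 //; case: #|S| ST.
Qed.

Definition minor_matrix : 'M['F_2]_nsets :=
  \matrix_(i < nsets, j < nsets) minor (enum_val j) (indic (enum_val i)).

Definition subset_zeta_matrix : 'M['F_2]_nsets :=
  \matrix_(i < nsets, j < nsets) (enum_val j \subset enum_val i)%:R.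

Lemma zeta_minor_matrixE i j : (subset_zeta_matrix *m minor_matrix) i j
  = \sum_(V : {set 'I_N} | V \subset enum_val i) minor (enum_val j) (indic V).
Proof.
rewrite mxE [RHS]big_mkcond [RHS](reindex _ (onW_bij _ (@enum_val_bij _))) /=.
apply: eq_bigr => k _.
by rewrite !mxE; case: (_ \subset _); rewrite ?mul1r ?mul0r.
Qed.

Lemma det_zeta_minor_matrix : \det (subset_zeta_matrix *m minor_matrix) = 1.
Proof.
apply: (det_weight_unitriangular (w := fun i : 'I_nsets => #|(enum_val i : {set 'I_N})|))
  => [i|i j ij].
  by rewrite zeta_minor_matrixE sum_subcube_principal_minor ?subxx.
rewrite ltnNge; apply: contra => ji; rewrite zeta_minor_matrixE.
rewrite sum_subcube_principal_minor //; apply/eqP.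
case sub_ij: (_ \subset _) => //.
by case/eqP: ij; apply: enum_val_inj; apply/eqP; rewrite eqEcard sub_ij.
Qed.

Lemma exists_perm_minor_neq0 :
  exists s : 'S_nsets, forall i, minor (enum_val (s i)) (indic (enum_val i)) != 0.
Proof.
have : \det minor_matrix != 0.
  apply: contra_eq_neq det_zeta_minor_matrix => detE.
  by rewrite det_mulmx detE mulr0 eq_sym oner_eq0.
by case/det_neq0_perm => s Es; exists s => i; move: (Es i); rewrite mxE.
Qed.

End PrincipalMinors.

Definition vanishing_on (F : finFieldType) n (S : {set 'I_n}) : {set 'cV[F]_n} :=
  [set y : 'cV[F]_n | [forall k in S, y k 0 == 0]]%R.

Section KernelBound.

Variables (F : finFieldType) (n : nat) (M : 'M[F]_n).

Lemma card_solutions_le_kernel (b : 'cV[F]_n) :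
  (#|[set y : 'cV[F]_n | M *m y == b]| <= #|[set y : 'cV[F]_n | M *m y == 0%R]|)%N.
Proof.
have [->|[y0]] := set_0Vmem [set y : 'cV[F]_n | M *m y == b]; first by rewrite cards0.
rewrite inE => /eqP My0.
have sub_inj : injective (fun y : 'cV[F]_n => y - y0) by move=> y1 y2 /addIr.
rewrite -(card_imset _ sub_inj); apply: subset_leq_card; apply/subsetP => _ /imsetP[y + ->].
by rewrite !inE => /eqP My; rewrite mulmxBr My My0 subrr.
Qed.

Lemma principal_submx_mulmx (S : {set 'I_n}) (d : 'cV[F]_n) :
  (forall k, k \notin S -> d k 0 = 0) ->
  principal_submx S M *m rowsub enum_val d = rowsub enum_val (M *m d).
Proof.
move=> d_out; apply/matrixP => i j; rewrite !mxE (ord1 j).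
rewrite [RHS](bigID (mem S)) /= [X in _ = _ + X]big1 ?addr0 => [|k /d_out->]; last first.
  by rewrite mulr0.
by rewrite [RHS](big_enum_val (A := mem S)) /=; apply: eq_bigr => k _; rewrite !mxE.
Qed.

(* Two kernel vectors that agree outside S differ by a kernel vector supported
   on S, which the invertible principal submatrix on S forces to vanish. *)
Lemma card_kernel_le_principal (S : {set 'I_n}) :
  \det (principal_submx S M) != 0 ->
  (#|[set y : 'cV[F]_n | M *m y == 0%R]|
     <= #|vanishing_on F S|)%N.
Proof.
move=> detMS; set K := [set y | _].
pose cut (y : 'cV[F]_n) : 'cV[F]_n := \col_k (if k \in S then 0 else y k 0).
suff cut_inj : {in K &, injective cut}.
  rewrite -(card_in_imset cut_inj); apply: subset_leq_card.
  by apply/subsetP => _ /imsetP[y _ ->]; rewrite inE; apply/forall_inP => k kS; rewrite mxE kS.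
move=> y1 y2; rewrite !inE => /eqP My1 /eqP My2 cut12; set d := y1 - y2.
have d_out k : k \notin S -> d k 0 = 0.
  by move=> kS; move/matrixP/(_ k 0): cut12; rewrite !mxE (negbTE kS) => ->; rewrite subrr.
have dS0 : rowsub enum_val d = 0 :> 'cV[F]_#|S|.
  have MSu : principal_submx S M \in unitmx by rewrite unitmxE unitfE.
  rewrite -(mulKmx MSu (rowsub enum_val d)) principal_submx_mulmx //.
  by rewrite /d mulmxDr mulmxN My1 My2 subrr linear0 mulmx0.
apply/eqP; rewrite -subr_eq0 -/d; apply/eqP/matrixP => k j; rewrite (ord1 j) [RHS]mxE.
have [kS|/d_out//] := boolP (k \in S).
by move/matrixP/(_ (enum_rank_in kS k) 0): dS0; rewrite !mxE enum_rankK_in.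
Qed.

End KernelBound.

Lemma card_pairs_sum (T1 T2 : finType) (B : T2 -> {set T1}) :
  #|[set p : T1 * T2 | p.1 \in B p.2]| = (\sum_b #|B b|)%N.
Proof.
rewrite -sum1_card (eq_bigl (fun p : T1 * T2 => p.1 \in B p.2)) => [|p]; last by rewrite inE.
rewrite big_mkcond -(pair_big xpredT xpredT (fun a b => if a \in B b then 1 else 0)%N) /=.
rewrite exchange_big; apply: eq_bigr => b _.
by rewrite -sum1_card [RHS]big_mkcond.
Qed.

(* A pair (y, S) with y vanishing on S is coded by the word k |-> 2 on S and
   k |-> y k off S. *)
Lemma sum_card_vanishing_on_F2 N :
  (\sum_(S : {set 'I_N}) #|vanishing_on 'F_2 S| <= 3 ^ N)%N.
Proof.
rewrite -card_pairs_sum; set X := [set p | _].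
pose code (p : 'cV['F_2]_N * {set 'I_N}) : {ffun 'I_N -> 'I_3} :=
  [ffun k => if k \in p.2 then inord 2 else inord (p.1 k 0)].
suff code_inj : {in X &, injective code}.
  by rewrite -(card_in_imset code_inj) (leq_trans (max_card _)) // card_ffun !card_ord.
move=> [y S] [y' S']; rewrite !inE /= => /forall_inP yS /forall_inP yS' /ffunP c.
have codeE p k : (code p k : nat) = if k \in p.2 then 2%N else p.1 k 0.
  by rewrite ffunE; case: ifP => _ /=; rewrite inordK // (@ltn_trans 2).
have {}c k : (if k \in S then 2%N else y k 0) = if k \in S' then 2%N else y' k 0.
  by rewrite -(codeE (y, S)) -(codeE (y', S')) c.
have ne2 (x : 'F_2) : (x : nat) != 2%N by case: (F2P x) => ->.
have SS' : S = S'.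
  apply/setP => k; case: (k \in S) (k \in S') (c k) => [] [] //= E.
    by move: (ne2 (y' k 0)); rewrite -E.
  by move: (ne2 (y k 0)); rewrite E.
rewrite -SS' in c yS' *; congr (_, _); apply/matrixP => k j; rewrite (ord1 j).
have [kS|kS] := boolP (k \in S); last by apply: val_inj; move: (c k); rewrite (negbTE kS).
by rewrite (eqP (yS k kS)) (eqP (yS' k kS)).
Qed.

Section SymmetricPencil.

Variables (N : nat) (A : 'I_N -> 'M['F_2]_N).
Hypothesis A_sym : forall i, (A i)^T = A i.
Hypothesis A_diag : forall i k, A i k k = (i == k)%:R.

Local Notation C z := (Amat A z - 1%:M).

Lemma Amat_entry z k l : Amat A z k l = \sum_i z i 0 * A i k l.
Proof. by rewrite summxE; apply: eq_bigr => i _; rewrite mxE. Qed.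

Lemma Amat_sub1_sym z : (C z)^T = C z.
Proof.
apply/matrixP => k l; rewrite !mxE !Amat_entry eq_sym; congr (_ - _).
by apply: eq_bigr => i _; rewrite -{1}(A_sym i) mxE.
Qed.

Lemma Amat_sub1_affine k l : affine_fun (fun z => C z k l).
Proof.
exists (- (k == l)%:R), (fun i => A i k l) => z.
by rewrite !mxE Amat_entry addrC; congr (_ + _); apply: eq_bigr => i _; rewrite mulrC.
Qed.

Lemma Amat_sub1_diag z k : C z k k = z k 0 + 1.
Proof.
rewrite !mxE Amat_entry eqxx oppr_pchar2 ?pchar_F2 // (bigD1 k) //= A_diag eqxx mulr1.
by rewrite big1 ?addr0 // => i /negbTE ik; rewrite A_diag ik mulr0.
Qed.

Lemma card_event_le :
  (#|[set yz : 'cV['F_2]_N * 'cV['F_2]_N |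
       Amat A yz.2 *m yz.1 == (yz.1 + yz.2 + ones N)%R]| <= 3 ^ N)%N.
Proof.
pose sols z := [set y : 'cV['F_2]_N | C z *m y == z + ones N].
have -> : [set yz | Amat A yz.2 *m yz.1 == yz.1 + yz.2 + ones N]
    = [set yz | yz.1 \in sols yz.2].
  apply/setP => -[y z]; rewrite !inE /= mulmxBl mul1mx subr_eq addrC.
  by congr (_ == _); rewrite addrCA addrC [ones N + _]addrC.
rewrite card_pairs_sum (reindex _ (onW_bij _ (bij_comp (@indic_bij N) (@enum_val_bij _)))) /=.
have [s s_minor] := exists_perm_minor_neq0 Amat_sub1_sym Amat_sub1_affine Amat_sub1_diag.
pose kernel z := [set y : 'cV['F_2]_N | C z *m y == 0%R].
apply: (@leq_trans (\sum_j #|kernel (indic (enum_val j))|)).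
  by apply: leq_sum => j _; apply: card_solutions_le_kernel.
apply: (@leq_trans (\sum_j #|vanishing_on 'F_2 (enum_val (s j))|)).
  by apply: leq_sum => j _; apply: card_kernel_le_principal.
rewrite (reindex_inj (@perm_inj _ s^-1)%g) /=.
under eq_bigr do rewrite permKV.
apply: leq_trans (sum_card_vanishing_on_F2 N).
by rewrite [leqRHS](reindex _ (onW_bij _ (@enum_val_bij _))).
Qed.

End SymmetricPencil.

Unset Implicit Arguments.

Theorem proposition4p5 (N : nat) (A : 'I_N -> 'M['F_2]_N)
  (Asym : forall i, (A i)^T = A i)
  (Adiag : forall i k : 'I_N, A i k k = (i == k)%:R) :
  prob_event A <= (3%:R / 4%:R) ^+ N.
Proof.
rewrite /prob_event card_prod card_mx card_Fp // muln1 -expnMn expr_div_n -!natrX.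
by rewrite ler_wpM2r ?invr_ge0 ?ler0n // ler_nat card_event_le.
Qed.
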